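(* Let $k \geq 2$, $n \geq 2$ and $\lambda \geq 1$ be integers. Suppose $A$ is an $\mathrm{OA}_{\lambda}(k,n)$ on a symbol set containing the symbol $1$, and suppose that the row $(1,1,\dots,1)$ is repeated $m$ times in $A$ (i.e., $m$ of the rows of $A$ equal $(1,1,\dots,1)$), where \[m = \frac{\lambda n^2}{k(n-1)+1}.\] Then every other row of $A$ (each of the remaining $\lambda n^2 - m$ rows) contains exactly \[\overline{a} = \frac{k(\lambda n - m)}{\lambda n^2-m}\] occurrences of the symbol $1$.
   Context: An orthogonal array $\mathrm{OA}_{\lambda}(k,n)$ (of strength two) is a $\lambda n^2$ by $k$ array $A$ with entries from a set $X$ of cardinality $n$ such that, within any two columns of $A$, every ordered pair of symbols from $X$ occurs in exactly $\lambda$ rows of $A$. *)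

From mathcomp Require Import all_boot all_order all_algebra.
Set Implicit Arguments. Unset Strict Implicit. Unset Printing Implicit Defensive.

Definition is_OA (X : finType) (lambda k n : nat)
  (A : 'I_(lambda * n ^ 2) -> 'I_k -> X) : Prop :=
  #|X| = n /\
  forall (c1 c2 : 'I_k), c1 != c2 -> forall x y : X,
    #|[set r | (A r c1 == x) && (A r c2 == y)]| = lambda.
Arguments is_OA : clear implicits.

Definition const_rows (X : finType) (N k : nat) (A : 'I_N -> 'I_k -> X) (s : X)
  : {set 'I_N} := [set r | [forall c, A r c == s]].

Definition occ (X : finType) (N k : nat) (A : 'I_N -> 'I_k -> X) (s : X)
  (r : 'I_N) : nat := #|[set c | A r c == s]|.

(* The number a_r of ones in row r is a random variable over the rows whose
   first two moments are fixed by the OA property: sum_r a_r = k*lambda*n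
   (each column holds lambda*n ones) and sum_r a_r^2 = k*(lambda*n + (k-1)*lambda)
   (ordered pairs of columns).  Removing the m constant rows, each contributing
   k and k^2, leaves N = lambda*n^2 - m rows with sums S1 and S2; the value of m
   makes N*S2 = S1^2, the equality case of Cauchy-Schwarz, so a_r = S1/N on all
   of them. *)
From mathcomp Require Import all_boot all_order all_algebra.
From mathcomp Require Import ring.

Set Implicit Arguments.
Unset Strict Implicit.
Unset Printing Implicit Defensive.

Import GRing.Theory Num.Theory.
Local Open Scope ring_scope.

Lemma card_set_indicator (T : finType) (P : pred T) :
  #|[set x | P x]| = (\sum_x (P x : nat))%N.
Proof.
rewrite -sum1_card big_mkcond /=; apply: eq_bigr => x _.
by rewrite inE; case: (P x).
Qed.

Lemma natr_sum_setC (R : pzRingType) (I : finType) (C : {set I})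
    (F : I -> nat) (c : nat) :
  {in C, forall i, F i = c} ->
  \sum_(i in ~: C) (F i)%:R = (\sum_i F i)%:R - (#|C| * c)%:R :> R.
Proof.
move=> FC; rewrite [in RHS](bigID (mem C)) /= (eq_bigr (fun=> c)) // sum_nat_const.
rewrite natrD addrAC subrr add0r natr_sum.
by apply: eq_bigl => i; rewrite in_setC.
Qed.

Lemma sum_sqr_eq_mean (R : realFieldType) (I : finType) (P : {pred I})
    (F : I -> R) :
  #|P|%:R * \sum_(i in P) F i ^+ 2 = (\sum_(i in P) F i) ^+ 2 ->
  {in P, forall i, F i = (\sum_(j in P) F j) / #|P|%:R}.
Proof.
set N := #|P|%:R; set S1 := \sum_(j in P) F j; set S2 := \sum_(j in P) F j ^+ 2.
move=> NS2 i Pi; have N0 : N != 0.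
  by rewrite pnatr_eq0 -lt0n; apply/card_gt0P; exists i.
set mu := S1 / N.
have dev0 : \sum_(j in P) (F j - mu) ^+ 2 = 0.
  rewrite (eq_bigr (fun j => F j ^+ 2 - 2 * mu * F j + mu ^+ 2)) => [|j _]; last by ring.
  rewrite !big_split /= sumrN sumr_const -mulr_sumr -/S1 -/S2 -/N.
  by rewrite -[S2](mulKf N0) NS2 /mu; field.
apply/eqP; rewrite -subr_eq0 -sqrf_eq0; apply/eqP.
exact: (psumr_eq0P (fun j _ => sqr_ge0 (F j - mu)) dev0).
Qed.

Lemma occ_const_rows (X : finType) (N k : nat) (A : 'I_N -> 'I_k -> X) (s : X) :
  {in const_rows A s, forall r, occ A s r = k}.
Proof.
move=> r; rewrite inE => /forallP Ar; rewrite /occ -[RHS]card_ord -cardsT.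
by apply: eq_card => c; rewrite !inE Ar.
Qed.

Lemma occE (X : finType) (N k : nat) (A : 'I_N -> 'I_k -> X) (s : X) r :
  occ A s r = (\sum_c (A r c == s : nat))%N.
Proof. exact: card_set_indicator. Qed.

Section OrthogonalArrayMoments.

Variables (X : finType) (lambda k n : nat) (A : 'I_(lambda * n ^ 2) -> 'I_k -> X).
Hypotheses (k2 : (2 <= k)%N) (oaA : is_OA X lambda k n A).

Lemma OA_col_card (c : 'I_k) (x : X) :
  #|[set r | A r c == x]| = (lambda * n)%N.
Proof.
have /card_gt0P[c' c'c] : (0 < #|predC1 c|)%N.
  by rewrite cardC1 card_ord ltn_predRL.
case: oaA => cardX pairs; rewrite card_set_indicator.
rewrite (eq_bigr (fun r => \sum_y ((A r c == x) && (A r c' == y) : nat)))%N.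
  rewrite exchange_big /= (eq_bigr (fun=> lambda)) => [|y _].
    by rewrite sum_nat_const cardT -cardE cardX mulnC.
  by rewrite -card_set_indicator pairs // eq_sym.
move=> r _; rewrite (bigD1 (A r c')) //= eqxx andbT big1 ?addn0 // => y yr.
by rewrite [A r c' == y]eq_sym (negbTE yr) andbF.
Qed.

Lemma OA_pair_card (c c' : 'I_k) (x : X) :
  #|[set r | (A r c == x) && (A r c' == x)]| =
    (if c == c' then lambda * n else lambda)%N.
Proof.
have [<- | cc'] := eqVneq c c'; last by case: oaA => _ ->.
by rewrite -(OA_col_card c x); apply: eq_card => r; rewrite !inE andbb.
Qed.

Lemma OA_sum_occ (s : X) : (\sum_r occ A s r)%N = (k * (lambda * n))%N.
Proof.
under eq_bigr do rewrite occE.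
rewrite exchange_big /= (eq_bigr (fun=> (lambda * n)%N)) => [|c _].
  by rewrite sum_nat_const card_ord.
by rewrite -card_set_indicator OA_col_card.
Qed.

Lemma OA_sum_occ_sqr (s : X) :
  (\sum_r occ A s r ^ 2)%N = (k * (lambda * n + (k - 1) * lambda))%N.
Proof.
have rowE r : (occ A s r ^ 2 =
    \sum_c \sum_c' ((A r c == s) && (A r c' == s) : nat))%N.
  rewrite occE expnS expn1 big_distrl /=; apply: eq_bigr => c _.
  rewrite big_distrr /=; apply: eq_bigr => c' _.
  by case: (A r c == s); rewrite ?mul1n.
under eq_bigr do rewrite rowE.
rewrite exchange_big /= (eq_bigr (fun=> lambda * n + (k - 1) * lambda)%N).
  by rewrite sum_nat_const card_ord.
move=> c _; rewrite exchange_big /= (bigD1 c) //=.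
rewrite -card_set_indicator OA_pair_card eqxx; congr (_ + _)%N.
rewrite (eq_bigr (fun=> lambda)) => [|c' c'c].
  by rewrite sum_nat_const cardC1 card_ord subn1.
by rewrite -card_set_indicator OA_pair_card eq_sym (negbTE c'c).
Qed.

End OrthogonalArrayMoments.

Lemma OA_moment_identity (R : comPzRingType) (k n l m : R) :
  m * (k * (n - 1) + 1) = l * n ^+ 2 ->
  (l * n ^+ 2 - m) * (k * (l * n + (k - 1) * l) - m * k ^+ 2) =
    (k * (l * n) - m * k) ^+ 2.
Proof.
move=> hm; apply/eqP; rewrite -subr_eq0; apply/eqP.
transitivity (k * l * (n - 1) * (l * n ^+ 2 - m * (k * (n - 1) + 1))).
  by ring.
by rewrite hm subrr mulr0.
Qed.

Theorem corollary4 (X : finType) (one : X) (k n lambda m : nat)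
  (A : 'I_(lambda * n ^ 2) -> 'I_k -> X) :
  (2 <= k)%N -> (2 <= n)%N -> (1 <= lambda)%N ->
  is_OA X lambda k n A ->
  #|const_rows A one| = m ->
  (m%:R : rat) = (lambda * n ^ 2)%:R / (k * (n - 1) + 1)%:R ->
  forall r, r \notin const_rows A one ->
    ((occ A one r)%:R : rat) =
      (k%:R * ((lambda * n)%:R - m%:R)) / ((lambda * n ^ 2)%:R - m%:R).
Proof.
move=> k2 n2 _ oaA Cm hm r rC.
set C := const_rows A one; set a := fun r => (occ A one r)%:R : rat.
have N_eq : #|~: C|%:R = (lambda * n ^ 2)%:R - m%:R :> rat.
  by apply/eqP; rewrite -Cm eq_sym subr_eq -natrD addnC cardsC card_ord.
have S1_eq : \sum_(i in ~: C) a i = (k * (lambda * n))%:R - (m * k)%:R.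
  by rewrite (natr_sum_setC _ (@occ_const_rows _ _ _ A one)) OA_sum_occ // Cm.
have S2_eq : \sum_(i in ~: C) a i ^+ 2 =
    (k * (lambda * n + (k - 1) * lambda))%:R - (m * k ^ 2)%:R.
  under eq_bigr do rewrite -natrX.
  rewrite (@natr_sum_setC _ _ _ _ (k ^ 2)) => [|i /occ_const_rows -> //].
  by rewrite OA_sum_occ_sqr // Cm.
have hmD : m%:R * (k%:R * (n%:R - 1) + 1) = lambda%:R * n%:R ^+ 2 :> rat.
  have -> : k%:R * (n%:R - 1) + 1 = (k * (n - 1) + 1)%:R :> rat.
    by rewrite natrD natrM natrB // (ltnW n2).
  by rewrite hm mulfVK ?pnatr_eq0 ?addn1 // natrM natrX.
have rC' : r \in ~: C by rewrite in_setC.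
rewrite -/(a r) (sum_sqr_eq_mean _ rC') N_eq S1_eq; last first.
  rewrite S2_eq !natrM !natrD !natrM natrB ?(ltnW k2) //.
  exact: OA_moment_identity hmD.
by rewrite mulrBr -!natrM [(k * m)%N]mulnC.
Qed.
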